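(* Let $f:\{0,1\}^n\to\{0,1\}^m$ be a Boolean function and let $r$ be the dimension of the affine span of $\operatorname{img}(f)$ in $\mathbb{F}_2^m$. Then $f$ is fully balanced if and only if $b(f)=2^r-1$.
   Context: Strings in $\{0,1\}^k$ are identified with vectors of $\mathbb{F}_2^k$; $\mathbf{a}\cdot\mathbf{b}=\bigoplus_i a_ib_i$ (mod 2). $f$ is $\mathbf{y}$-balanced if $f(\mathbf{x})\cdot\mathbf{y}=0$ for exactly half of the $\mathbf{x}\in\{0,1\}^n$ and $=1$ for the other half, and $\mathbf{y}$-constant if $f(\mathbf{x})\cdot\mathbf{y}$ is the same for all $\mathbf{x}$. $f$ is fully balanced if for every $\mathbf{y}\in\{0,1\}^m$ it is either $\mathbf{y}$-balanced or $\mathbf{y}$-constant. $C(f)=\{\mathbf{y}: f\text{ is }\mathbf{y}\text{-constant}\}$, $B(f)=\{\mathbf{y}: f\text{ is }\mathbf{y}\text{-balanced}\}$, and $b(f)=\#B(f)/\#C(f)$. *)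

From HB Require Import structures.
From mathcomp Require Import all_boot all_order all_algebra.
Set Implicit Arguments. Unset Strict Implicit. Unset Printing Implicit Defensive.
Import GRing.Theory.
Local Open Scope ring_scope.

Notation bits k := 'rV['F_2]_k.

Definition dotF2 (k : nat) (a b : bits k) : 'F_2 := \sum_(i < k) a 0 i * b 0 i.

Definition y_balanced (n m : nat) (f : bits n -> bits m) (y : bits m) : bool :=
  (2 * #|[set x : bits n | dotF2 (f x) y == (0%R : 'F_2)]| == 2 ^ n)%N &&
  (2 * #|[set x : bits n | dotF2 (f x) y == (1%R : 'F_2)]| == 2 ^ n)%N.

Definition y_constant (n m : nat) (f : bits n -> bits m) (y : bits m) : bool :=
  [exists c : 'F_2, [forall x : bits n, dotF2 (f x) y == c]].

Definition fully_balanced (n m : nat) (f : bits n -> bits m) : Prop :=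
  forall y : bits m, y_balanced f y || y_constant f y.

Definition Cset (n m : nat) (f : bits n -> bits m) : {set bits m} :=
  [set y | y_constant f y].
Definition Bset (n m : nat) (f : bits n -> bits m) : {set bits m} :=
  [set y | y_balanced f y].

Definition bratio (n m : nat) (f : bits n -> bits m) : rat :=
  (#|Bset f|)%:R / (#|Cset f|)%:R.

(* dimension of the affine span of img f: the dimension of its direction
   space, i.e. the linear span of all differences a - b with a, b in img f *)
Definition affine_span_dim (n m : nat) (f : bits n -> bits m) : nat :=
  \dim <<[seq a - b | a <- codom f, b <- codom f]>>%VS.

From HB Require Import structures.
From mathcomp Require Import all_boot all_order all_algebra finfield mxabelem.
Set Implicit Arguments. Unset Strict Implicit. Unset Printing Implicit Defensive.
Import GRing.Theory Num.Theory.
Local Open Scope ring_scope.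

(* Let D be the direction space of the affine span of img f, of dimension r.
   The map y |-> f(x).y is constant exactly when y is orthogonal to D, so
   C(f) = D^perp has 2^(m-r) elements.  A y-constant f is never y-balanced,
   so B(f) is always contained in the complement of C(f), of size
   (2^r - 1) 2^(m-r); f is fully balanced iff B(f) fills this complement,
   i.e. iff #B(f) = (2^r - 1) #C(f). *)

Definition rowseq_mx (F : fieldType) m (s : seq 'rV[F]_m) : 'M[F]_(size s, m) :=
  \matrix_(i < size s) s`_i.

Lemma memv_span_rowseq_mx (F : fieldType) m (s : seq 'rV[F]_m) x :
  (x \in <<s>>%VS) = (x <= rowseq_mx s)%MS.
Proof.
apply/idP/idP => [x_s | /submxP[c ->]].
  have x_st : x \in <<in_tuple s>>%VS by [].
  rewrite (coord_span x_st); apply: summx_sub => i _; apply: scalemx_sub.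
  have -> : (in_tuple s)`_i = row i (rowseq_mx s) by rewrite rowK.
  exact: row_sub.
rewrite mulmx_sum_row; apply: memv_suml => i _; apply: memvZ.
by rewrite rowK memv_span ?mem_nth.
Qed.

Lemma dim_span_rowseq_mx (F : finFieldType) m (s : seq 'rV[F]_m) :
  \dim <<s>>%VS = \rank (rowseq_mx s).
Proof.
have card_span : #|<<s>>%VS| = #|rowg (rowseq_mx s)|.
  by apply: eq_card => x; rewrite mem_rowg -memv_span_rowseq_mx.
have F_gt1 : (1 < #|F|)%N by rewrite (cardD1 0) (cardD1 1) !inE oner_neq0.
apply/eqP; rewrite -(eqn_exp2l _ _ F_gt1) -card_vspace -card_rowg.
by rewrite card_span.
Qed.

Lemma dotF2_subl k (a b y : bits k) : dotF2 (a - b) y = dotF2 a y - dotF2 b y.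
Proof. by rewrite /dotF2 -sumrB; apply: eq_bigr => i _; rewrite !mxE mulrBl. Qed.

Lemma sub_kermx_tr_rowseq_mx k (s : seq (bits k)) (y : bits k) :
  (y <= kermx (rowseq_mx s)^T)%MS = all (fun d => dotF2 d y == 0) s.
Proof.
have entry i : (y *m (rowseq_mx s)^T) 0 i = dotF2 s`_i y.
  by rewrite !mxE; apply: eq_bigr => j _; rewrite !mxE mulrC.
apply/sub_kermxP/(all_nthP 0) => [ker_y i i_lt | dot0].
  by rewrite -(entry (Ordinal i_lt)) ker_y mxE.
by apply/rowP => i; rewrite entry mxE; apply/eqP/dot0.
Qed.

Lemma F2_eq01 (c : 'F_2) : c = 0 \/ c = 1.
Proof. by case: c => [[|[|k]]] //= c_lt; [left | right]; apply/val_inj. Qed.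

Lemma card_bits k : #|[set: bits k]| = (2 ^ k)%N.
Proof. by rewrite cardsT card_mx card_Fp // mul1n. Qed.

Section ConstantAndBalanced.
Variables (n m : nat) (f : bits n -> bits m).

Let D := [seq a - b | a <- codom f, b <- codom f].

Lemma y_constant_diff y : y_constant f y = all (fun d => dotF2 d y == 0) D.
Proof.
apply/existsP/allP => [[c /forallP const_c] _ /allpairsP[[a b] [/= fa fb ->]]
                     | dot0].
  case/codomP: fa => x1 ->; case/codomP: fb => x2 ->.
  by rewrite dotF2_subl (eqP (const_c x1)) (eqP (const_c x2)) subrr.
exists (dotF2 (f 0) y); apply/forallP => x.
have Dx : f x - f 0 \in D by apply/allpairsP; exists (f x, f 0); rewrite /= !codom_f.
by have := dot0 _ Dx; rewrite dotF2_subl subr_eq0.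
Qed.

Lemma affine_span_dim_rank : affine_span_dim f = \rank (rowseq_mx D).
Proof. exact: dim_span_rowseq_mx. Qed.

Lemma affine_span_dim_leq : (affine_span_dim f <= m)%N.
Proof. by rewrite affine_span_dim_rank rank_leq_col. Qed.

Lemma card_Cset : #|Cset f| = (2 ^ (m - affine_span_dim f))%N.
Proof.
have -> : #|Cset f| = #|rowg (kermx (rowseq_mx D)^T)|.
  apply: eq_card => y.
  by rewrite mem_rowg sub_kermx_tr_rowseq_mx inE y_constant_diff.
by rewrite card_rowg card_Fp // mxrank_ker mxrank_tr affine_span_dim_rank.
Qed.

Lemma card_setC_Cset :
  #|~: Cset f| = ((2 ^ affine_span_dim f - 1) * 2 ^ (m - affine_span_dim f))%N.
Proof.
have total := cardsC (Cset f).
rewrite -cardsT card_bits card_Cset in total.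
by rewrite mulnBl mul1n -expnD subnKC ?affine_span_dim_leq // -total addKn.
Qed.

(* If f(x).y is constantly c, the set where it equals c has all 2^n elements,
   which cannot be half of 2^n. *)
Lemma y_balanced_not_constant y : y_balanced f y -> ~~ y_constant f y.
Proof.
case/andP=> [half0 half1]; apply/negP => /existsP[c /forallP const_c].
have card_c : #|[set x : bits n | dotF2 (f x) y == c]| = (2 ^ n)%N.
  by rewrite -card_bits; apply: eq_card => x; rewrite !inE const_c.
have not_half : (2 * 2 ^ n == 2 ^ n)%N = false.
  by rewrite -[X in (_ == X)%N]mul1n eqn_pmul2r ?expn_gt0.
case: (F2_eq01 c) => c_val; rewrite c_val in card_c.
  by move: half0; rewrite card_c not_half.
by move: half1; rewrite card_c not_half.
Qed.

Lemma Bset_sub_setC_Cset : Bset f \subset ~: Cset f.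
Proof. by apply/subsetP => y; rewrite !inE => /y_balanced_not_constant. Qed.

Lemma fully_balanced_BsetE : fully_balanced f <-> Bset f = ~: Cset f.
Proof.
split=> [fb | BE y].
  apply/setP => y; rewrite in_setC !inE.
  move: (fb y) (@y_balanced_not_constant y).
  by case: y_balanced; case: y_constant => // _ /(_ isT).
by have := in_setC y (Cset f); rewrite -BE !inE => ->; case: y_constant.
Qed.

Lemma Bset_eq_setC_CsetE : Bset f = ~: Cset f <-> #|Bset f| = #|~: Cset f|.
Proof.
split=> [-> // | card_eq]; apply/eqP.
by rewrite eqEcard Bset_sub_setC_Cset card_eq leqnn.
Qed.

End ConstantAndBalanced.

Theorem mainTheorem6 (n m : nat) (f : bits n -> bits m) :
  fully_balanced f <-> bratio f = (2 ^ affine_span_dim f - 1)%N%:R.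
Proof.
set r := affine_span_dim f.
have C_neq0 : ((2 ^ (m - r))%:R != 0 :> rat) by rewrite pnatr_eq0 -lt0n expn_gt0.
apply: (iff_trans (fully_balanced_BsetE f)).
apply: (iff_trans (Bset_eq_setC_CsetE f)).
rewrite /bratio card_setC_Cset card_Cset -/r.
split=> [-> | ratio]; first by rewrite natrM mulfK.
by apply/eqP; rewrite -(eqr_nat rat) natrM -ratio divfK.
Qed.
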